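(* Let $p,q$ be coprime odd integers with $p>|q|>0$, and let $S(p,q)$ be the corresponding 2-bridge knot. Let $S_0(S(p,q))$ be the subset of the $SL(2,\mathbb{C})$-character variety $X(\pi_1(E_{S(p,q)}))$ consisting of characters $\chi_\rho$ with $\chi_\rho(\mu)=\operatorname{trace}(\rho(\mu))=0$, where $\mu$ is a meridian. Then $S_0(S(p,q))$ is a finite set consisting of exactly the characters of metabelian representations: namely the single character of an abelian (reducible) representation together with the $\frac{p-1}{2}$ distinct characters of irreducible metabelian representations.
   Context: $E_K$ is the exterior of a knot $K$ in $S^3$ and $\pi_1(E_K)$ its knot group. For coprime odd integers $p,q$ with $p>|q|>0$, the 2-bridge knot $S(p,q)$ (Schubert notation) has knot group $\langle x_1,x_2\mid wx_1=x_2w\rangle$ with $w=x_1^{e_1}x_2^{e_2}x_1^{e_3}\cdots x_2^{e_{p-1}}$, $e_i=(-1)^{\lfloor iq/p\rfloor}$, where $x_1,x_2$ are meridians. For a finitely presented group $G$, the $SL(2,\mathbb{C})$-character variety $X(G)$ is the set of characters $\chi_\rho(g)=\operatorname{trace}(\rho(g))$ of representations $\rho:G\to SL(2,\mathbb{C})$ (in the sense of Culler–Shalen), an affine algebraic variety. A representation $\rho$ is metabelian if $\rho([G,G])$ is abelian. *)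

From HB Require Import structures.
From mathcomp Require Import all_boot all_order all_algebra.
From mathcomp Require Import complex.
From mathcomp Require Import Rstruct.
Set Implicit Arguments. Unset Strict Implicit. Unset Printing Implicit Defensive.
Import Order.TTheory GRing.Theory Num.Theory.
Local Open Scope ring_scope.

Definition CC : fieldType := (Rdefinitions.R)[i].

(* Words in the generators x1, x2 of the knot group and their inverses.
   A letter (g, b) stands for x_(g+1)^(+-1): g = false is x1, g = true is x2;
   b = true means the inverse.  Every element of pi_1(E_K) is represented
   by such a word (the free group on x1, x2 surjects onto the knot group). *)
Definition letter := (bool * bool)%type.
Definition word := seq letter.

Definition mx_letter (X1 X2 : 'M[CC]_2) (l : letter) : 'M[CC]_2 :=
  let X := if l.1 then X2 else X1 in if l.2 then invmx X else X.

Definition evalw (X1 X2 : 'M[CC]_2) (w : word) : 'M[CC]_2 :=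
  foldr (fun l M => mx_letter X1 X2 l *m M) 1%:M w.

Definition oddz (z : int) : bool := odd (absz z).

(* The word w = x1^{e_1} x2^{e_2} x1^{e_3} ... x2^{e_{p-1}},
   e_i = (-1)^floor(i q / p): letter i is x1 for i odd, x2 for i even,
   inverted iff floor(i q / p) is odd ((_ %/ _)%Z is floor division for p > 0). *)
Definition wpq (p : nat) (q : int) : word :=
  [seq (~~ odd i, oddz ((i%:Z * q) %/ p%:Z)%Z) | i <- iota 1 p.-1].

(* SL(2,C)-representations of pi_1(E_{S(p,q)}) = < x1, x2 | w x1 = x2 w >:
   they are exactly the pairs (rho(x1), rho(x2)) of SL(2,C)-matrices
   satisfying the relation. *)
Definition is_rep (p : nat) (q : int) (X1 X2 : 'M[CC]_2) : Prop :=
  \det X1 = 1 /\ \det X2 = 1 /\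
  evalw X1 X2 (wpq p q) *m X1 = X2 *m evalw X1 X2 (wpq p q).

Definition charac (X1 X2 : 'M[CC]_2) : word -> CC :=
  fun w => \tr (evalw X1 X2 w).

Definition invw (w : word) : word := rev [seq (l.1, ~~ l.2) | l <- w].
Definition commw (u v : word) : word := invw u ++ invw v ++ u ++ v.

Inductive in_comm : word -> Prop :=
| in_comm_nil : in_comm [::]
| in_comm_comm u v : in_comm (commw u v)
| in_comm_inv w : in_comm w -> in_comm (invw w)
| in_comm_cat w1 w2 : in_comm w1 -> in_comm w2 -> in_comm (w1 ++ w2).

Definition metabelian (X1 X2 : 'M[CC]_2) : Prop :=
  forall u v, in_comm u -> in_comm v ->
    evalw X1 X2 u *m evalw X1 X2 v = evalw X1 X2 v *m evalw X1 X2 u.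

Definition abelian_rep (X1 X2 : 'M[CC]_2) : Prop :=
  forall u v, evalw X1 X2 u *m evalw X1 X2 v = evalw X1 X2 v *m evalw X1 X2 u.

(* rho is reducible: there is a common invariant line in C^2
   (row vectors, matrices acting on the right). *)
Definition reducible (X1 X2 : 'M[CC]_2) : Prop :=
  exists v : 'rV[CC]_2, v != 0 /\
    exists a b : CC, v *m X1 = a *: v /\ v *m X2 = b *: v.

Definition irreducible (X1 X2 : 'M[CC]_2) : Prop := ~ reducible X1 X2.

(* S_0(S(p,q)) : characters chi_rho with trace rho(mu) = 0, mu = x1 *)
Definition in_S0 (p : nat) (q : int) (chi : word -> CC) : Prop :=
  exists X1 X2, is_rep p q X1 X2 /\ \tr X1 = 0 /\ chi = charac X1 X2.

From HB Require Import structures.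
From mathcomp Require Import all_boot all_order all_algebra all_solvable all_field.
From mathcomp Require Import complex Rstruct ring zify.
From Stdlib Require Import FunctionalExtensionality.
Set Implicit Arguments. Unset Strict Implicit. Unset Printing Implicit Defensive.
Import Order.TTheory GRing.Theory Num.Theory.
Local Open Scope ring_scope.

(* With tr rho(x1) = 0, Cayley-Hamilton gives rho(x1)^2 = rho(x2)^2 = -1, so the
   algebra generated by X1 = rho(x1) and X2 = rho(x2) is spanned by 1, T, X1, T X1,
   where T = X1 X2, with structure constants depending only on t = tr T.  Hence
   chi_rho is determined by t, and words of even length, in particular those of
   [G,G], evaluate into the commutative algebra C[T]: rho is metabelian.
   The word w evaluates to +-T^((p-1)/2), so the relation w x1 = x2 w amounts to
   T^p = -1.  Thus t = c + c^-1 with c^p = -1; c = -1 exactly for the reducible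
   (abelian) representations, and the (p-1)/2 other values of c + c^-1 are
   realised by X1 = [[0,1],[-1,0]], X2 = [[0,-c^-1],[c,0]]. *)

Section Matrix2.
Variable R : comRingType.
Implicit Types (A : 'M[R]_2) (a b c d : R).

Lemma ord2P (i : 'I_2) : i = 0 \/ i = 1.
Proof. by case: i => [[|[|//]] Hi]; [left|right]; apply/val_inj. Qed.

Lemma sum_ord2 (F : 'I_2 -> R) : \sum_(i < 2) F i = F 0 + F 1.
Proof. by rewrite !big_ord_recl big_ord0 addr0; congr (F _ + F _); apply/val_inj. Qed.

Lemma mxtrace2E A : \tr A = A 0 0 + A 1 1.
Proof. by rewrite /mxtrace sum_ord2. Qed.

Lemma det2E A : \det A = A 0 0 * A 1 1 - A 0 1 * A 1 0.
Proof.
rewrite (expand_det_row _ 0) sum_ord2 /cofactor !det_mx11 !mxE /= expr0 expr1.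
have -> : lift 0 0 = 1 :> 'I_2 by apply/val_inj.
have -> : lift 1 0 = 0 :> 'I_2 by apply/val_inj.
ring.
Qed.

Lemma Cayley_Hamilton_mx2 A : A *m A = \tr A *: A - (\det A)%:M.
Proof.
apply/matrixP=> i j; rewrite det2E mxtrace2E !mxE sum_ord2.
by case: (ord2P i) => ->; case: (ord2P j) => -> /=; rewrite ?mulr1n ?mulr0n; ring.
Qed.

Definition mx2 a b c d : 'M[R]_2 :=
  \matrix_(i, j) if i == 0 then (if j == 0 then a else b)
                 else (if j == 0 then c else d).

Lemma mul_mx2 a b c d a' b' c' d' :
  mx2 a b c d *m mx2 a' b' c' d' =
  mx2 (a * a' + b * c') (a * b' + b * d') (c * a' + d * c') (c * b' + d * d').
Proof.
apply/matrixP=> i j; rewrite !mxE sum_ord2 !mxE.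
by case: (ord2P i) => ->; case: (ord2P j) => ->.
Qed.

Lemma scalar_mx2 a : a%:M = mx2 a 0 0 a.
Proof.
by apply/matrixP=> i j; rewrite !mxE; case: (ord2P i) => ->; case: (ord2P j) => ->.
Qed.

Lemma mxtrace_mx2 a b c d : \tr (mx2 a b c d) = a + d.
Proof. by rewrite mxtrace2E !mxE. Qed.

Lemma det_mx2 a b c d : \det (mx2 a b c d) = a * d - b * c.
Proof. by rewrite det2E !mxE. Qed.

End Matrix2.

Section FieldLinearAlgebra.
Variable F : fieldType.

Lemma scalerIv n (v : 'rV[F]_n) a b : v != 0 -> a *: v = b *: v -> a = b.
Proof.
move=> v_neq0 eq_av_bv; apply/eqP; rewrite -subr_eq0.
have : (a - b) *: v == 0 by rewrite scalerBl eq_av_bv subrr.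
by rewrite scalemx_eq0 (negbTE v_neq0) orbF.
Qed.

Lemma eigenvalue_sqrN1 n (X : 'M[F]_n) (v : 'rV[F]_n) a :
  v != 0 -> v *m X = a *: v -> X *m X = - 1%:M -> a * a = -1.
Proof.
move=> v_neq0 vX sqrX; apply: (scalerIv v_neq0).
have : v *m (X *m X) = (a * a) *: v by rewrite mulmxA vX -scalemxAl vX scalerA.
by rewrite sqrX mulmxN mulmx1 scaleN1r => <-.
Qed.

Lemma eigenvector_pow n (M : 'M[F]_n.+1) (v : 'rV_n.+1) c m :
  v *m M = c *: v -> v *m M ^+ m = c ^+ m *: v.
Proof.
move=> vM; elim: m => [|m IH]; first by rewrite expr0 mulmx1 scale1r.
by rewrite exprSr -mulmxE mulmxA IH -scalemxAl vM scalerA -exprSr.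
Qed.

(* The roots of a quadratic annihilating polynomial of M are eigenvalues:
   if M - a is invertible then some row of M - a is killed by M - b. *)
Lemma eigenvector_quadratic (M : 'M[F]_2) a b :
  M *m M = (a + b) *: M - (a * b)%:M ->
  exists v : 'rV[F]_2, exists c, [/\ v != 0, v *m M = c *: v & c = a \/ c = b].
Proof.
move=> sqrM.
have prod0 : (M - a%:M) *m (M - b%:M) = 0.
  rewrite mulmxBl !mulmxBr sqrM mul_mx_scalar !mul_scalar_mx.
  by apply/matrixP=> i j; rewrite !mxE; ring.
have [Ma|Ma] := eqVneq (M - a%:M) 0.
  exists (delta_mx 0 0), a; split; last by left.
  - by apply/eqP=> /matrixP /(_ 0 0); rewrite !mxE /= => /eqP; rewrite oner_eq0.
  - by rewrite (subr0_eq Ma) mul_mx_scalar.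
have [i Mi|] := pickP (fun i => row i (M - a%:M) != 0).
  exists (row i (M - a%:M)), b; split => //; last by right.
  have : row i (M - a%:M) *m (M - b%:M) = 0 by rewrite -row_mul prod0 row0.
  by rewrite mulmxBr mul_mx_scalar => /eqP; rewrite subr_eq0 => /eqP.
move=> rows0; case/eqP: Ma; apply/row_matrixP => i; rewrite row0.
by apply/eqP/negbFE/rows0.
Qed.

Lemma addfV_eqN2 (c : F) : c != 0 -> c + c^-1 = -2 -> c = -1.
Proof.
move=> c_neq0 eq_c.
have : (c + 1) ^+ 2 = 0.
  have -> : (c + 1) ^+ 2 = c * (c + c^-1 + 2) by field.
  by rewrite eq_c addNr mulr0.
by move/eqP; rewrite sqrf_eq0 addr_eq0 => /eqP.
Qed.

Lemma eq_addfV (a b : F) : a != 0 -> b != 0 -> a + a^-1 = b + b^-1 ->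
  a = b \/ a * b = 1.
Proof.
move=> a_neq0 b_neq0 eq_ab.
have : (a - b) * (a * b - 1) = 0.
  have -> : (a - b) * (a * b - 1) = a * b * (a + a^-1) - a * b * (b + b^-1).
    by field; apply/andP.
  by rewrite eq_ab subrr.
by move/eqP; rewrite mulf_eq0 !subr_eq0 => /orP[/eqP|/eqP]; [left|right].
Qed.

End FieldLinearAlgebra.

Lemma unipotent_odd_pow (F : numFieldType) n (M : 'M[F]_n.+1) p : odd p ->
  (M + 1) * (M + 1) = 0 -> M ^+ p = -1 -> M = -1.
Proof.
move=> odd_p; set N := M + 1 => NN Mp.
have powM m : M ^+ m = (-1) ^+ m *: (1 - m%:R *: N).
  elim: m => [|m IH]; first by rewrite expr0 scale0r subr0 scale1r.
  rewrite exprSr IH -scalerAl [(-1) ^+ m.+1]exprSr -scalerA; congr (_ *: _).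
  have -> : M = N - 1 by rewrite /N addrK.
  rewrite mulrBl !mulrBr !mul1r !mulr1 -scalerAl NN scaler0.
  by apply/matrixP=> i j; rewrite !mxE; ring.
have : p%:R *: N == 0.
  move: Mp; rewrite powM -signr_odd odd_p expr1 scaleN1r => /oppr_inj /eqP.
  by rewrite -subr_eq0 addrAC subrr add0r oppr_eq0.
rewrite scalemx_eq0 pnatr_eq0 => /orP[/eqP p0|N0]; first by move: odd_p; rewrite p0.
by apply/eqP; rewrite -addr_eq0.
Qed.

Lemma prim_root_exists (F : numClosedFieldType) n :
  (0 < n)%N -> exists z : F, n.-primitive_root z.
Proof.
move=> n_gt0; pose P : {poly F} := 'X^n - 1.
have [r DP] := closed_field_poly_normal P.
rewrite (monicP _) ?monicXnsubC // scale1r in DP.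
have r_unity : all n.-unity_root r by apply/allP=> z; rewrite -root_prod_XsubC -DP.
have size_r : (n < (size r).+1)%N.
  by rewrite -(size_prod_XsubC r id) -DP size_XnsubC.
have [|z] := hasP (has_prim_root n_gt0 r_unity _ size_r); last by exists z.
by rewrite -separable_prod_XsubC -DP separable_Xn_sub_1 // pnatr_eq0 -lt0n.
Qed.

Lemma eigenvector_det1 (F : numClosedFieldType) (M : 'M[F]_2) : \det M = 1 ->
  exists v : 'rV_2, exists c, [/\ v != 0, v *m M = c *: v & c * (\tr M - c) = 1].
Proof.
move=> detM; set t := \tr M; set s := sqrtC (t ^+ 2 - 4); set l := (t + s) / 2.
have ls : l * (t - l) = 1.
  have -> : l * (t - l) = (t ^+ 2 - s ^+ 2) / 4 by rewrite /l; field.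
  by rewrite sqrtCK; field.
have sqrM : M *m M = (l + (t - l)) *: M - (l * (t - l))%:M.
  by rewrite ls [l + _]addrC subrK -detM Cayley_Hamilton_mx2.
have [v [c [v_neq0 vc c_root]]] := eigenvector_quadratic sqrM.
exists v, c; split => //; case: c_root => -> //.
by rewrite mulrC -ls; congr (_ * _); ring.
Qed.

Lemma mxtrace_powN1 (F : numClosedFieldType) (M : 'M[F]_2) p :
  \det M = 1 -> M ^+ p = -1 -> exists c : F, c ^+ p = -1 /\ \tr M = c + c^-1.
Proof.
move=> detM Mp; have [v [c [v_neq0 vc ct]]] := eigenvector_det1 detM.
have c_neq0 : c != 0 by apply/eqP=> c0; move: ct; rewrite c0 mul0r => /eqP; rewrite eq_sym oner_eq0.
exists c; split.
  by apply: (scalerIv v_neq0); rewrite -(eigenvector_pow p vc) Mp scaleN1r mulmxN mulmx1.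
have -> : c^-1 = \tr M - c by apply: (mulfI c_neq0); rewrite ct mulfV.
by rewrite addrC subrK.
Qed.

Definition sl2_tr0 (X : 'M[CC]_2) : Prop := \tr X = 0 /\ \det X = 1.

Lemma sqr_sl2_tr0 X : sl2_tr0 X -> X *m X = - 1%:M.
Proof. by case=> trX detX; rewrite Cayley_Hamilton_mx2 trX detX scale0r sub0r. Qed.

Lemma invmx_sl2_tr0 X : sl2_tr0 X -> invmx X = - X.
Proof.
move=> hX; have uX : X \in unitmx by rewrite unitmxE hX.2 unitr1.
by rewrite -[invmx X]mulmx1 -[1%:M]opprK -(sqr_sl2_tr0 hX) mulmxN mulmxA mulVmx // mul1mx.
Qed.

Lemma mx_letter_sl2_tr0 X1 X2 (l : letter) : sl2_tr0 X1 -> sl2_tr0 X2 ->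
  mx_letter X1 X2 l = (-1) ^+ l.2 *: (if l.1 then X2 else X1).
Proof.
by move=> h1 h2; case: l => [[] []]; rewrite /mx_letter /= ?invmx_sl2_tr0 ?scaleN1r ?scale1r.
Qed.

(* Coordinates of rho(w) in the basis (1, T, X1, T X1) of the algebra generated
   by X1, X2 in sl2_tr0, where T = X1 X2 and t = tr T; note X2 = - X1 T. *)
Definition coords := (CC * CC * CC * CC)%type.

Definition coords_opp (v : coords) : coords :=
  let: (a, b, c, d) := v in (- a, - b, - c, - d).
Definition coords_X1 (t : CC) (v : coords) : coords :=
  let: (a, b, c, d) := v in (- c - t * d, d, a + t * b, - b).
Definition coords_T (t : CC) (v : coords) : coords :=
  let: (a, b, c, d) := v in (- b, a + t * b, - d, c + t * d).
Definition coords_X2 (t : CC) (v : coords) : coords :=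
  coords_opp (coords_X1 t (coords_T t v)).
Definition coords_letter (t : CC) (l : letter) (v : coords) : coords :=
  let v' := if l.1 then coords_X2 t v else coords_X1 t v in
  if l.2 then coords_opp v' else v'.
Definition word_coords (t : CC) (w : word) : coords :=
  foldr (coords_letter t) (1, 0, 0, 0) w.

Section TraceFreePair.
Variables X1 X2 : 'M[CC]_2.
Hypotheses (h1 : sl2_tr0 X1) (h2 : sl2_tr0 X2).
Local Notation T := (X1 *m X2).
Local Notation t := (\tr (X1 *m X2)).

Lemma sqr_X1 : X1 *m X1 = - 1%:M. Proof. exact: sqr_sl2_tr0. Qed.
Lemma sqr_X2 : X2 *m X2 = - 1%:M. Proof. exact: sqr_sl2_tr0. Qed.

Lemma sqr_T : T *m T = t *: T - 1%:M.
Proof. by rewrite Cayley_Hamilton_mx2 det_mulmx h1.2 h2.2 mulr1. Qed.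

Lemma X1T : X1 *m T = - X2.
Proof. by rewrite mulmxA sqr_X1 mulNmx mul1mx. Qed.

Lemma X2X1 : X2 *m X1 = t%:M - T.
Proof.
have ST : X2 *m X1 *m T = 1%:M.
  by rewrite -!mulmxA (mulmxA X1) sqr_X1 mulNmx mul1mx mulmxN sqr_X2 opprK.
have T_inv : T *m (t%:M - T) = 1%:M.
  by rewrite mulmxBr mul_mx_scalar sqr_T opprB addrC subrK.
by rewrite -[X2 *m X1]mulmx1 -T_inv mulmxA ST mul1mx.
Qed.

Lemma X1TX1 : X1 *m T *m X1 = T - t%:M.
Proof. by rewrite X1T mulNmx X2X1 opprB. Qed.

Definition mx_of_coords (v : coords) : 'M[CC]_2 :=
  let: (a, b, c, d) := v in a%:M + b *: T + c *: X1 + d *: (T *m X1).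

Lemma mxtrace_TX1 : \tr (T *m X1) = 0.
Proof. by rewrite mxtrace_mulC X1T raddfN /= h2.1 oppr0. Qed.

Lemma mxtrace_coords v :
  \tr (mx_of_coords v) = let: (a, b, c, d) := v in a *+ 2 + b * t.
Proof.
case: v => [[[a b] c] d] /=.
by rewrite !mxtraceD mxtrace_scalar !mxtraceZ mxtrace_TX1 h1.1 !mulr0 !addr0.
Qed.

Lemma mx_of_coords_opp v : - mx_of_coords v = mx_of_coords (coords_opp v).
Proof. by case: v => [[[a b] c] d]; apply/matrixP=> i j; rewrite !mxE; ring. Qed.

Lemma mulX1_coords v : X1 *m mx_of_coords v = mx_of_coords (coords_X1 t v).
Proof.
case: v => [[[a b] c] d] /=.
rewrite !mulmxDr mul_mx_scalar -!scalemxAr (mulmxA X1 T X1) X1TX1 sqr_X1.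
have -> : X1 *m T = t *: X1 - T *m X1.
  by rewrite -mulmxA X2X1 mulmxBr mul_mx_scalar opprB addrC subrK.
by apply/matrixP=> i j; rewrite !mxE; ring.
Qed.

Lemma mulT_coords v : T *m mx_of_coords v = mx_of_coords (coords_T t v).
Proof.
case: v => [[[a b] c] d] /=.
rewrite !mulmxDr mul_mx_scalar -!scalemxAr (mulmxA T T X1) sqr_T mulmxBl.
by rewrite -scalemxAl mul1mx; apply/matrixP=> i j; rewrite !mxE; ring.
Qed.

Lemma mulX2_coords v : X2 *m mx_of_coords v = mx_of_coords (coords_X2 t v).
Proof.
have -> : X2 *m mx_of_coords v = - (X1 *m (T *m mx_of_coords v)).
  by rewrite mulmxA X1T mulNmx opprK.
by rewrite mulT_coords mulX1_coords mx_of_coords_opp.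
Qed.

Lemma evalw_coords w : evalw X1 X2 w = mx_of_coords (word_coords t w).
Proof.
elim: w => [|l w IH] /=.
  by apply/matrixP=> i j; rewrite !mxE; ring.
rewrite IH mx_letter_sl2_tr0 // -scalemxAl.
by case: l => [[] []] /=; rewrite ?scaleN1r ?scale1r ?mulX1_coords ?mulX2_coords ?mx_of_coords_opp.
Qed.

Lemma charac_coords w :
  charac X1 X2 w = let: (a, b, _, _) := word_coords t w in a *+ 2 + b * t.
Proof.
rewrite /charac evalw_coords mxtrace_coords.
by case: (word_coords _ w) => [[[a b] c] d].
Qed.

End TraceFreePair.

Lemma charac_sl2_tr0_eq X1 X2 Y1 Y2 :
  sl2_tr0 X1 -> sl2_tr0 X2 -> sl2_tr0 Y1 -> sl2_tr0 Y2 ->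
  \tr (X1 *m X2) = \tr (Y1 *m Y2) -> charac X1 X2 = charac Y1 Y2.
Proof.
move=> hX1 hX2 hY1 hY2 eq_t; apply: functional_extensionality => w.
by rewrite (charac_coords hX1 hX2) (charac_coords hY1 hY2) eq_t.
Qed.

Definition coords_parity (o : bool) (v : coords) : Prop :=
  let: (a, b, c, d) := v in if o then a = 0 /\ b = 0 else c = 0 /\ d = 0.

Lemma word_coords_parity t w : coords_parity (odd (size w)) (word_coords t w).
Proof.
elim: w => [|l w IH] //=; move: IH; case: (word_coords t w) => [[[a b] c] d].
by case: (odd (size w)) => -[-> ->]; case: l => [[] []] /=; split; ring.
Qed.

Lemma size_invw w : size (invw w) = size w.
Proof. by rewrite size_rev size_map. Qed.

Lemma in_comm_even w : in_comm w -> ~~ odd (size w).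
Proof.
elim=> [|u v|w' _ IH|w1 w2 _ IH1 _ IH2] //=.
- by rewrite !size_cat !size_invw !oddD; case: (odd (size u)); case: (odd (size v)).
- by rewrite size_invw.
- by rewrite size_cat oddD (negbTE IH1) (negbTE IH2).
Qed.

Lemma metabelian_sl2_tr0 X1 X2 : sl2_tr0 X1 -> sl2_tr0 X2 -> metabelian X1 X2.
Proof.
move=> h1 h2.
have even_poly w : in_comm w ->
    exists a b : CC, evalw X1 X2 w = a%:M + b *: (X1 *m X2).
  move=> hw; rewrite (evalw_coords h1 h2).
  have := word_coords_parity (\tr (X1 *m X2)) w; rewrite (negbTE (in_comm_even hw)).
  case: (word_coords _ w) => [[[a b] c] d] /= [-> ->]; exists a, b.
  by rewrite !scale0r !addr0.
move=> u v /even_poly[a [b ->]] /even_poly[a' [b' ->]].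
rewrite !mulmxDl !mulmxDr !mul_scalar_mx !mul_mx_scalar -!scalemxAl -!scalemxAr.
by apply/matrixP=> i j; rewrite !mxE; ring.
Qed.

Lemma unitmx_evalw X1 X2 w :
  X1 \in unitmx -> X2 \in unitmx -> evalw X1 X2 w \in unitmx.
Proof.
move=> u1 u2; elim: w => [|l w IH] /=; first exact: unitmx1.
by rewrite unitmx_mul IH andbT /mx_letter; case: l => [[] []] /=; rewrite ?unitmx_inv.
Qed.

(* The relation makes rho(x2) conjugate to rho(x1). *)
Lemma sl2_tr0_rep p q X1 X2 :
  is_rep p q X1 X2 -> \tr X1 = 0 -> sl2_tr0 X1 /\ sl2_tr0 X2.
Proof.
move=> [det1 [det2 rel]] tr1; split; split => //.
have [u1 u2] : X1 \in unitmx /\ X2 \in unitmx by rewrite !unitmxE det1 det2 unitr1.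
have uW := unitmx_evalw (wpq p q) u1 u2.
have -> : X2 = evalw X1 X2 (wpq p q) *m X1 *m invmx (evalw X1 X2 (wpq p q)).
  by rewrite rel -mulmxA mulmxV // mulmx1.
by rewrite mxtrace_mulC mulmxA mulVmx // mul1mx.
Qed.

Lemma evalw_alternating X1 X2 (f : nat -> letter) : sl2_tr0 X1 -> sl2_tr0 X2 ->
  (forall i, (f i).1 = ~~ odd i) ->
  forall n m, exists s : bool,
    evalw X1 X2 (map f (iota m.*2.+1 n.*2)) = (-1) ^+ s *: (X1 *m X2) ^+ n.
Proof.
move=> h1 h2 f_alt; elim=> [|n IH] m; first by exists false; rewrite expr0 scale1r.
have [s Es] := IH m.+1.
rewrite doubleS /= -[m.*2.+3]/((m.+1).*2.+1) Es !mx_letter_sl2_tr0 // !f_alt /=.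
rewrite !odd_double /=; exists ((f m.*2.+1).2 (+) (f m.*2.+2).2 (+) s).
rewrite !signr_addb exprS -!scalemxAr -!scalemxAl !scalerA -!scalemxAr !scalerA mulmxA.
by congr (_ *: _); ring.
Qed.

Lemma odd_pred_half p : odd p -> p = (p.-1./2).*2.+1.
Proof. by case: p => [//|p] /= odd_p; rewrite -{1}(odd_double_half p) (negbTE odd_p). Qed.

(* Consecutive letters x1^(+-1) x2^(+-1) of w pair up into +-T. *)
Lemma evalw_wpq X1 X2 p q : sl2_tr0 X1 -> sl2_tr0 X2 -> odd p ->
  exists s : bool, evalw X1 X2 (wpq p q) = (-1) ^+ s *: (X1 *m X2) ^+ p.-1./2.
Proof.
move=> h1 h2 odd_p; have k2 : p.-1 = (p.-1./2).*2 by rewrite {1}(odd_pred_half odd_p).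
rewrite /wpq [in iota _ _]k2.
exact: (@evalw_alternating X1 X2 (fun i => (~~ odd i, _)) h1 h2 (fun i => erefl) _ 0).
Qed.

Section PowersOfT.
Variables X1 X2 : 'M[CC]_2.
Hypotheses (h1 : sl2_tr0 X1) (h2 : sl2_tr0 X2).
Local Notation T := (X1 * X2).
Local Notation S := (X2 * X1).

Lemma X2_opp_X1T : X2 = - (X1 * T).
Proof. by rewrite -!mulmxE X1T ?opprK. Qed.

Lemma mulX1_powT n : X1 * T ^+ n = S ^+ n * X1.
Proof.
have X1T_SX1 : X1 * T = S * X1.
  by rewrite -!mulmxE mulmxA (sqr_X1 h1) -mulmxA (sqr_X1 h1) mulNmx mulmxN !mul1mx mulmx1.
elim: n => [|n IH]; first by rewrite !expr0 mulr1 mul1r.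
by rewrite exprS mulrA X1T_SX1 -mulrA IH mulrA -exprS.
Qed.

Lemma mulTS : T * S = 1.
Proof.
by rewrite -!mulmxE -!mulmxA (mulmxA X2) (sqr_X2 h2) mulNmx mul1mx mulmxN (sqr_X1 h1) opprK.
Qed.

Lemma mulST : S * T = 1.
Proof.
by rewrite -!mulmxE -!mulmxA (mulmxA X1) (sqr_X1 h1) mulNmx mul1mx mulmxN (sqr_X2 h2) opprK.
Qed.

Lemma powTS n : T ^+ n * S ^+ n = 1.
Proof. by rewrite -exprMn_comm ?mulTS ?expr1n // /GRing.comm mulTS mulST. Qed.

Lemma powST n : S ^+ n * T ^+ n = 1.
Proof. by rewrite -exprMn_comm ?mulST ?expr1n // /GRing.comm mulTS mulST. Qed.

(* Since X1 T^k = S^k X1 with S = T^-1, conjugation by T^k sends X1 to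
   X2 = - X1 T exactly when T^k = - S^(k+1). *)
Lemma powT_conjP k : T ^+ k * X1 = X2 * T ^+ k <-> T ^+ k.*2.+1 = -1.
Proof.
have split_pow : T ^+ k.*2.+1 = T ^+ k * T ^+ k.+1 by rewrite -exprD addnS addnn.
have X2Tk : X2 * T ^+ k = - (S ^+ k.+1 * X1).
  by rewrite {1}X2_opp_X1T mulNr -mulrA -exprS mulX1_powT.
have X1_unit : X1 \is a GRing.unit by rewrite unitmxE h1.2 unitr1.
split=> [rel|Tp].
- have Tk : T ^+ k = - S ^+ k.+1.
    by apply: (mulIr X1_unit); rewrite /= rel X2Tk mulNr.
  by rewrite split_pow Tk mulNr powST.
- have Tk : T ^+ k = - S ^+ k.+1.
    by rewrite -[T ^+ k]mulr1 -(powTS k.+1) mulrA -split_pow Tp mulN1r.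
  by rewrite X2Tk Tk mulNr.
Qed.

End PowersOfT.

Lemma is_rep_sl2_tr0P p q X1 X2 : odd p -> sl2_tr0 X1 -> sl2_tr0 X2 ->
  is_rep p q X1 X2 <-> (X1 * X2) ^+ p = -1.
Proof.
move=> odd_p h1 h2; have [s Ew] := evalw_wpq q h1 h2 odd_p.
have -> : (X1 * X2) ^+ p = (X1 * X2) ^+ (p.-1./2).*2.+1 by rewrite -odd_pred_half.
rewrite -(powT_conjP h1 h2) /is_rep Ew -scalemxAl -scalemxAr !mulmxE.
split=> [[_ [_ /scalerI]]|->]; last by rewrite h1.2 h2.2.
by apply; rewrite signr_eq0.
Qed.

(* A common eigenvector of X1, X2 is an eigenvector of T for ab, where
   a^2 = b^2 = -1; then T^p = -1 with p odd forces ab = -1. *)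
Lemma mxtrace_reducible p X1 X2 : odd p -> sl2_tr0 X1 -> sl2_tr0 X2 ->
  (X1 * X2) ^+ p = -1 -> reducible X1 X2 -> \tr (X1 *m X2) = -2.
Proof.
move=> odd_p h1 h2 Tp [v [v_neq0 [a [b [va vb]]]]].
have aa := eigenvalue_sqrN1 v_neq0 va (sqr_X1 h1).
have bb := eigenvalue_sqrN1 v_neq0 vb (sqr_X2 h2).
have vT : v *m (X1 *m X2) = (a * b) *: v by rewrite mulmxA va -scalemxAl vb scalerA.
have ab : a * b = -1.
  have := eigenvector_pow p vT; rewrite Tp mulmxN mulmx1 -scaleN1r.
  move=> /esym/(scalerIv v_neq0); rewrite {1}(odd_pred_half odd_p) exprS -mul2n exprM.
  have ab2 : (a * b) ^+ 2 = 1 by rewrite expr2 mulrACA aa bb mulrNN mulr1.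
  by rewrite ab2 expr1n mulr1.
rewrite ab scaleN1r in vT.
have : v *m (X1 *m X2 *m (X1 *m X2)) = v by rewrite mulmxA vT mulNmx vT opprK.
rewrite sqr_T // mulmxBr mulmx1 -scalemxAr vT => e.
have : (- \tr (X1 *m X2) - 1) *: v = 1 *: v by rewrite scalerBl !scale1r scaleNr -scalerN e.
move/(scalerIv v_neq0) => e'; have -> : \tr (X1 *m X2) = - (- \tr (X1 *m X2) - 1) - 1 by ring.
by rewrite e'; ring.
Qed.

(* For t = -2 the relation T^p = -1 forces T = -1, hence X2 = - X1 T = X1. *)
Lemma reducible_of_mxtrace p X1 X2 : odd p -> sl2_tr0 X1 -> sl2_tr0 X2 ->
  \tr (X1 *m X2) = -2 -> (X1 * X2) ^+ p = -1 -> reducible X1 X2.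
Proof.
move=> odd_p h1 h2 t2 Tp.
have T1 : X1 * X2 = -1.
  apply: (unipotent_odd_pow odd_p _ Tp).
  rewrite mulrDl !mulrDr !mulr1 !mul1r -!mulmxE (sqr_T h1 h2) t2.
  by apply/matrixP=> i j; rewrite !mxE; ring.
have X2X1 : X2 = X1 by rewrite (X2_opp_X1T X2 h1) T1 mulrN1 opprK.
have sqrX1 : X1 *m X1 = ('i + - 'i) *: X1 - ('i * - 'i)%:M.
  by rewrite subrr scale0r sub0r mulrN -expr2 sqrCi opprK (sqr_X1 h1).
have [v [c [v_neq0 vc _]]] := eigenvector_quadratic sqrX1.
by exists v; split => //; exists c, c; rewrite X2X1.
Qed.

Lemma reducible_sl2_tr0P p X1 X2 : odd p -> sl2_tr0 X1 -> sl2_tr0 X2 ->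
  (X1 * X2) ^+ p = -1 -> reducible X1 X2 <-> \tr (X1 *m X2) = -2.
Proof.
move=> odd_p h1 h2 Tp; split; first exact: mxtrace_reducible odd_p h1 h2 Tp.
by move=> t2; apply: (reducible_of_mxtrace odd_p h1 h2 t2).
Qed.

Section OddRootsOfUnity.
Variables (F : numFieldType) (p : nat) (z : F).
Hypotheses (odd_p : odd p) (z_prim : (p.*2).-primitive_root z).
Local Notation k := (p.-1./2).

(* The roots of X^p + 1 are the odd powers of z; those other than -1 come in
   pairs {c, c^-1}, represented by z^(2i+1) with i < (p-1)/2. *)
Definition odd_root (i : nat) : F := z ^+ i.*2.+1.

Lemma z_neq0 : z != 0.
Proof.
apply/eqP=> z0; have := prim_expr_order z_prim; rewrite z0 expr0n.
by rewrite double_eq0 eqn0Ngt (odd_gt0 odd_p) => /eqP; rewrite eq_sym oner_eq0.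
Qed.

Lemma z_pow_p : z ^+ p = -1.
Proof.
have : (z ^+ p) ^+ 2 == 1 by rewrite -exprM muln2 (prim_expr_order z_prim).
rewrite sqrf_eq1 => /orP[|/eqP //].
rewrite -(prim_order_dvd z_prim) => /dvdn_leq; rewrite (odd_gt0 odd_p) -addnn => /(_ isT).
by have := odd_gt0 odd_p; lia.
Qed.

Lemma odd_root_pow_p i : odd_root i ^+ p = -1.
Proof. by rewrite /odd_root -exprM mulnC exprM z_pow_p -signr_odd /= odd_double. Qed.

Lemma odd_root_neq0 i : odd_root i != 0.
Proof. by rewrite expf_neq0 // z_neq0. Qed.

Lemma odd_root_neqN1 i : (i < k)%N -> odd_root i != -1.
Proof.
move=> ik; rewrite -z_pow_p /odd_root (eq_prim_root_expr z_prim) !modn_small.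
- by apply/eqP; rewrite (odd_pred_half odd_p) -!addnn; lia.
- by rewrite -addnn; have := odd_gt0 odd_p; lia.
- by rewrite (odd_pred_half odd_p) -!addnn; lia.
Qed.

Lemma odd_root_addV_inj i j : (i < k)%N -> (j < k)%N ->
  odd_root i + (odd_root i)^-1 = odd_root j + (odd_root j)^-1 -> i = j.
Proof.
move=> ik jk /(eq_addfV (odd_root_neq0 i) (odd_root_neq0 j))[|].
  rewrite /odd_root => /eqP; rewrite (eq_prim_root_expr z_prim) !modn_small.
  - by move/eqP; lia.
  - by rewrite (odd_pred_half odd_p) -!addnn; lia.
  - by rewrite (odd_pred_half odd_p) -!addnn; lia.
rewrite /odd_root -exprD => /eqP; rewrite -(prim_order_dvd z_prim) => /dvdn_leq.
by rewrite (odd_pred_half odd_p) -!addnn => /(_ isT); move: ik jk; lia.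
Qed.

Lemma odd_exp_odd_root j : odd j -> (j < p)%N ->
  exists2 m, (m < k)%N & z ^+ j = odd_root m.
Proof.
move=> odd_j jp; have j_eq := odd_double_half j; rewrite odd_j in j_eq.
exists j./2; last by rewrite /odd_root -[in LHS]j_eq add1n.
by move: jp; rewrite (odd_pred_half odd_p) -j_eq -!addnn; lia.
Qed.

Lemma addV_root_powN1 (c : F) : c ^+ p = -1 -> c != -1 ->
  exists2 m, (m < k)%N & c + c^-1 = odd_root m + (odd_root m)^-1.
Proof.
move=> cp c_neqN1.
have c_neq0 : c != 0.
  apply: contra_eq_neq cp => ->.
  by rewrite expr0n gtn_eqF ?(odd_gt0 odd_p) // eq_sym oppr_eq0 oner_neq0.
have c_pow_2p : c ^+ p.*2 = 1 by rewrite -muln2 exprM cp -signr_odd.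
have [[j j_lt] /= cj] := prim_rootP z_prim c_pow_2p.
have odd_j : odd j.
  apply/negPn/negP => even_j; move: cp; rewrite cj -exprM.
  have -> : (j * p = p.*2 * j./2)%N.
    by rewrite -{1}(odd_double_half j) (negbTE even_j) -!muln2; lia.
  rewrite exprM (prim_expr_order z_prim) expr1n => /eqP.
  by rewrite -subr_eq0 opprK -[1 + 1]/(2%:R : F) pnatr_eq0.
case: (ltngtP j p) => [jp|pj|jp].
- by have [m mk e] := odd_exp_odd_root odd_j jp; exists m; rewrite // cj e.
- have odd_j' : odd (p.*2 - j) by rewrite oddB ?odd_double ?odd_j // ltnW.
  have j'p : (p.*2 - j < p)%N by move: pj j_lt; rewrite -addnn; lia.
  have [m mk e] := odd_exp_odd_root odd_j' j'p; exists m => //.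
  have <- : c^-1 = odd_root m.
    apply: (mulfI c_neq0); rewrite mulfV // -e cj -exprD subnKC ?(prim_expr_order z_prim) //.
    exact: ltnW.
  by rewrite invrK addrC.
- by move: c_neqN1; rewrite cj jp z_pow_p eqxx.
Qed.

End OddRootsOfUnity.

Definition X0 : 'M[CC]_2 := mx2 0 1 (-1) 0.
Definition Yl (l : CC) : 'M[CC]_2 := mx2 0 (- l^-1) l 0.

Lemma sl2_tr0_X0 : sl2_tr0 X0.
Proof. by split; rewrite ?mxtrace_mx2 ?det_mx2; ring. Qed.

Lemma sl2_tr0_Yl l : l != 0 -> sl2_tr0 (Yl l).
Proof.
by move=> l_neq0; split; rewrite ?mxtrace_mx2 ?det_mx2 ?addr0 // mul0r sub0r mulNr opprK mulVf.
Qed.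

Lemma X0Yl l : X0 *m Yl l = mx2 l 0 0 l^-1.
Proof. by rewrite mul_mx2; congr mx2; ring. Qed.

Lemma mxtrace_X0Yl l : \tr (X0 *m Yl l) = l + l^-1.
Proof. by rewrite X0Yl mxtrace_mx2. Qed.

Lemma X0Yl_powN1 l p : l != 0 -> l ^+ p = -1 -> (X0 * Yl l) ^+ p = -1.
Proof.
move=> l_neq0 lp; have pow n : (X0 * Yl l) ^+ n = mx2 (l ^+ n) 0 0 (l^-1 ^+ n).
  elim: n => [|n IH]; first by rewrite !expr0 -idmxE scalar_mx2.
  by rewrite exprS IH -mulmxE X0Yl mul_mx2 !exprS; congr mx2; ring.
rewrite pow exprVn lp invrN1; apply/matrixP=> i j; rewrite !mxE.
by case: (ord2P i) => ->; case: (ord2P j) => -> /=; rewrite ?mulr1n ?mulr0n ?oppr0.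
Qed.

Lemma abelian_rep_same X : sl2_tr0 X -> abelian_rep X X.
Proof.
move=> hX.
have evalw_lin w : exists x y : CC, evalw X X w = x%:M + y *: X.
  elim: w => [|l w [x [y IH]]] /=; first by exists 1, 0; rewrite scale0r addr0.
  rewrite IH mx_letter_sl2_tr0 // if_same -scalemxAl mulmxDr mul_mx_scalar -scalemxAr.
  rewrite (sqr_sl2_tr0 hX); exists ((-1) ^+ l.2 * - y), ((-1) ^+ l.2 * x).
  by apply/matrixP=> i j; rewrite !mxE; ring.
move=> u v; have [x [y ->]] := evalw_lin u; have [x' [y' ->]] := evalw_lin v.
rewrite !mulmxDl !mulmxDr !mul_scalar_mx !mul_mx_scalar -!scalemxAl -!scalemxAr.
by apply/matrixP=> i j; rewrite !mxE; ring.
Qed.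

Lemma mxtrace_X0X0 : \tr (X0 *m X0) = -2.
Proof. by rewrite (sqr_sl2_tr0 sl2_tr0_X0) raddfN /= mxtrace1. Qed.

Lemma charac_x1x2 X1 X2 :
  charac X1 X2 [:: (false, false); (true, false)] = \tr (X1 *m X2).
Proof. by rewrite /charac /= mulmx1. Qed.

Lemma metabelian_rep_tr0 p q X1 X2 :
  is_rep p q X1 X2 -> \tr X1 = 0 -> metabelian X1 X2.
Proof. by move=> rep tr1; have [h1 h2] := sl2_tr0_rep rep tr1; exact: metabelian_sl2_tr0. Qed.

Lemma charac_reducible p q X1 X2 : odd p -> is_rep p q X1 X2 -> \tr X1 = 0 ->
  reducible X1 X2 -> charac X1 X2 = charac X0 X0.
Proof.
move=> odd_p rep tr1 red; have [h1 h2] := sl2_tr0_rep rep tr1.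
have Tp := (is_rep_sl2_tr0P q odd_p h1 h2).1 rep.
apply: charac_sl2_tr0_eq => //; try exact: sl2_tr0_X0.
by rewrite (mxtrace_reducible odd_p h1 h2 Tp red) mxtrace_X0X0.
Qed.

Lemma is_rep_X0 p q : odd p -> is_rep p q X0 X0.
Proof.
move=> odd_p; apply/(is_rep_sl2_tr0P q odd_p sl2_tr0_X0 sl2_tr0_X0).
by rewrite -mulmxE (sqr_sl2_tr0 sl2_tr0_X0) idmxE -signr_odd odd_p expr1.
Qed.

Section MetabelianCharacters.
Variables (p : nat) (z : CC).
Hypotheses (odd_p : odd p) (z_prim : (p.*2).-primitive_root z).
Local Notation k := (p.-1./2).
Local Notation Y i := (Yl (odd_root z i)).

Lemma X0Y_powN1 i : (X0 * Y i) ^+ p = -1.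
Proof.
exact: X0Yl_powN1 (odd_root_neq0 odd_p z_prim i) (odd_root_pow_p odd_p z_prim i).
Qed.

Lemma is_rep_X0Y q i : is_rep p q X0 (Y i).
Proof.
have l_neq0 := odd_root_neq0 odd_p z_prim i.
by apply/(is_rep_sl2_tr0P q odd_p sl2_tr0_X0 (sl2_tr0_Yl l_neq0))/X0Y_powN1.
Qed.

Lemma irreducible_X0Y i : (i < k)%N -> irreducible X0 (Y i).
Proof.
have l_neq0 := odd_root_neq0 odd_p z_prim i.
move=> ik /(reducible_sl2_tr0P odd_p sl2_tr0_X0 (sl2_tr0_Yl l_neq0) (X0Y_powN1 i)).
rewrite mxtrace_X0Yl => /(addfV_eqN2 l_neq0) /eqP.
by rewrite (negbTE (odd_root_neqN1 odd_p z_prim ik)).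
Qed.

Lemma charac_X0Y_inj i j : (i < k)%N -> (j < k)%N ->
  charac X0 (Y i) = charac X0 (Y j) -> i = j.
Proof.
move=> ik jk /(congr1 (fun chi => chi [:: (false, false); (true, false)])).
rewrite /= !charac_x1x2 !mxtrace_X0Yl; exact (odd_root_addV_inj odd_p z_prim ik jk).
Qed.

Lemma charac_X0Y_neq_X0 i : (i < k)%N -> charac X0 (Y i) <> charac X0 X0.
Proof.
move=> ik /(congr1 (fun chi => chi [:: (false, false); (true, false)])).
rewrite /= !charac_x1x2 => e; apply: (irreducible_X0Y ik).
have l_neq0 := odd_root_neq0 odd_p z_prim i.
apply/(reducible_sl2_tr0P odd_p sl2_tr0_X0 (sl2_tr0_Yl l_neq0) (X0Y_powN1 i)).
by rewrite e mxtrace_X0X0.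
Qed.

Lemma charac_irreducible q X1 X2 :
  is_rep p q X1 X2 -> \tr X1 = 0 -> irreducible X1 X2 ->
  exists2 m, (m < k)%N & charac X1 X2 = charac X0 (Y m).
Proof.
move=> rep tr1 irr; have [h1 h2] := sl2_tr0_rep rep tr1.
have Tp := (is_rep_sl2_tr0P q odd_p h1 h2).1 rep.
have detT : \det (X1 * X2) = 1 by rewrite -mulmxE det_mulmx h1.2 h2.2 mulr1.
have [c [cp]] := mxtrace_powN1 detT Tp; rewrite -mulmxE => tc.
have [c_eq|c_neq] := eqVneq c (-1).
  by case: irr; apply/(reducible_sl2_tr0P odd_p h1 h2 Tp); rewrite tc c_eq invrN1; ring.
have [m mk e] := addV_root_powN1 odd_p z_prim cp c_neq; exists m => //.
apply: charac_sl2_tr0_eq => //; first exact: sl2_tr0_X0.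
  exact: sl2_tr0_Yl (odd_root_neq0 odd_p z_prim m).
by rewrite mxtrace_X0Yl tc e.
Qed.

End MetabelianCharacters.

Theorem mainTheorem3 (p : nat) (q : int) :
  odd p -> oddz q -> (0 < absz q)%N -> (absz q < p)%N -> coprime p (absz q) ->
  (* every character in S_0 is the character of a metabelian representation *)
  (forall chi, in_S0 p q chi ->
     exists X1 X2, [/\ is_rep p q X1 X2, metabelian X1 X2 & chi = charac X1 X2]) /\
  (* the single character of an abelian (reducible) representation ... *)
  (exists A1 A2,
     [/\ is_rep p q A1 A2, \tr A1 = 0, abelian_rep A1 A2,
         (forall X1 X2, is_rep p q X1 X2 -> \tr X1 = 0 -> reducible X1 X2 ->
            charac X1 X2 = charac A1 A2) &
     (* ... together with (p-1)/2 distinct characters of irreducible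
        metabelian representations *)
     exists B1 B2 : 'I_(p.-1./2) -> 'M[CC]_2,
       [/\ forall i, [/\ is_rep p q (B1 i) (B2 i), \tr (B1 i) = 0,
                         irreducible (B1 i) (B2 i) & metabelian (B1 i) (B2 i)],
           forall i j, charac (B1 i) (B2 i) = charac (B1 j) (B2 j) -> i = j,
           forall i, charac (B1 i) (B2 i) <> charac A1 A2 &
           forall X1 X2, is_rep p q X1 X2 -> \tr X1 = 0 -> irreducible X1 X2 ->
             exists i, charac X1 X2 = charac (B1 i) (B2 i)]]).
Proof.
move=> odd_p _ _ _ _; split.
  move=> chi [X1 [X2 [rep [tr1 ->]]]]; exists X1, X2.
  by split => //; exact: metabelian_rep_tr0 rep tr1.
have [z z_prim] : exists z : CC, (p.*2).-primitive_root z.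
  by apply: prim_root_exists; rewrite double_gt0 (odd_gt0 odd_p).
exists X0, X0; split; [exact: is_rep_X0 odd_p|exact: sl2_tr0_X0.1|
  exact: abelian_rep_same sl2_tr0_X0|move=> ? ?; exact: charac_reducible odd_p|].
exists (fun _ => X0), (fun i => Yl (odd_root z i)); split.
- move=> i; have rep := is_rep_X0Y odd_p z_prim q i.
  split=> //; [exact: sl2_tr0_X0.1| |exact (metabelian_rep_tr0 rep sl2_tr0_X0.1)].
  exact (irreducible_X0Y odd_p z_prim (ltn_ord i)).
- by move=> i j /(charac_X0Y_inj odd_p z_prim (ltn_ord i) (ltn_ord j)) /val_inj.
- by move=> i; exact (charac_X0Y_neq_X0 odd_p z_prim (ltn_ord i)).
- move=> X1 X2 rep tr1 irr.
  by have [m mk ->] := charac_irreducible odd_p z_prim rep tr1 irr; exists (Ordinal mk).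
Qed.
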